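(* Let $\mu$ be the invariant self-similar measure of a homogeneous WIFS $(\lambda x+t_i,p_i)_{i\in I}$ with $0<\lambda<1$, supported in $[0,1)$. Let $q>1$ be such that $\alpha=\tau_\mu'(q)$ exists, and write $\tau=\tau_\mu$. (i) For every $\kappa>0$ there is $\eta=\eta(\kappa,q)>0$ such that for all sufficiently large $m$: for every $s\in\mathbb{N}$, every $I\in\mathcal{D}_s$ and every collection $\mathcal{D}'$ of intervals of $\mathcal{D}_{s+m}$ contained in $I$ with $|\mathcal{D}'|\le 2^{(\tau^*(\alpha)-\kappa)m}$, \[ \sum_{J\in\mathcal{D}'}\mu(J)^q\le 2^{-(\tau(q)+\eta)m}\mu(2I)^q . \] (ii) For every $\delta>0$, for all sufficiently large $m$, for every $s\in\mathbb{N}$ and $I\in\mathcal{D}_s$, \[ \sum_{J\in\mathcal{D}_{s+m},\,J\subset I}\mu(J)^q\le 2^{-(\tau(q)-\delta)m}\mu(2I)^q . \]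
   Context: Invariant measure: $\mu=\sum_ip_i\,f_i\mu$ with $f_i(x)=\lambda x+t_i$. Logs base 2. $\mathcal{D}_m=\{[j2^{-m},(j+1)2^{-m}):j\in\mathbb{Z}\}$. For $q>0$, $\tau_\mu(q)=\liminf_{m\to\infty}-\frac1m\log\sum_{J\in\mathcal{D}_m,\mu(J)>0}\mu(J)^q$, and $\tau^*(\alpha)=\inf_{q>0}(\alpha q-\tau(q))$ (the Legendre transform). $2I$ denotes the interval with the same center as $I$ and twice its length. *)

From Stdlib Require Import Reals Lra Lia ZArith List.
Open Scope R_scope.

Inductive borel : (R -> Prop) -> Prop :=
| borel_Ioo (a b : R) : borel (fun x => a < x < b)
| borel_compl (A : R -> Prop) : borel A -> borel (fun x => ~ A x)
| borel_cunion (A : nat -> R -> Prop) :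
    (forall n, borel (A n)) -> borel (fun x => exists n, A n x).

Record is_prob_measure (mu : (R -> Prop) -> R) : Prop := {
  pm_nonneg : forall A, borel A -> 0 <= mu A;
  pm_sigma_add : forall A : nat -> R -> Prop,
      (forall n, borel (A n)) ->
      (forall n k x, n <> k -> A n x -> A k x -> False) ->
      infinite_sum (fun n => mu (A n)) (mu (fun x => exists n, A n x));
  pm_total : mu (fun _ => True) = 1
}.

Fixpoint fsum (f : nat -> R) (n : nat) : R :=
  match n with O => 0 | S k => fsum f k + f k end.

(* mu is invariant for the homogeneous WIFS (lam x + t i, p i)_{i<n}:
   mu = sum_i p_i f_i mu, where (f_i mu)(A) = mu (f_i^{-1} A). *)
Definition wifs_invariant (n : nat) (lam : R) (t p : nat -> R)
  (mu : (R -> Prop) -> R) : Prop :=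
  forall A, borel A -> mu A = fsum (fun i => p i * mu (fun x => A (lam * x + t i))) n.

(* x^q for x >= 0, q > 0, with 0^q = 0 *)
Definition rpow (x q : R) : R := if Rlt_dec 0 x then Rpower x q else 0.

Definition log2 (x : R) : R := ln x / ln 2.

Definition dyad (s : nat) (j : Z) : R -> Prop :=
  fun x => IZR j / 2 ^ s <= x < (IZR j + 1) / 2 ^ s.

(* 2I for I = dyad s j : same center, twice the length *)
Definition dyad2 (s : nat) (j : Z) : R -> Prop :=
  fun x => (IZR j - / 2) / 2 ^ s <= x < (IZR j + 3 / 2) / 2 ^ s.

(* sum_{J in D_m, mu(J) > 0} mu(J)^q ; since mu is supported in [0,1),
   only the J = dyad m j with 0 <= j < 2^m can have positive mass. *)
Definition moment_sum (mu : (R -> Prop) -> R) (q : R) (m : nat) : R :=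
  fsum (fun j => rpow (mu (dyad m (Z.of_nat j))) q) (2 ^ m)%nat.

Definition is_liminf (a : nat -> R) (l : R) : Prop :=
  forall eps, 0 < eps ->
    (exists N, forall k, (N <= k)%nat -> l - eps < a k) /\
    (forall N, exists k, (N <= k)%nat /\ a k < l + eps).

Definition is_Lq_spectrum (mu : (R -> Prop) -> R) (tau : R -> R) : Prop :=
  forall q, 0 < q ->
    is_liminf (fun m => - log2 (moment_sum mu q m) / INR m) (tau q).

Definition is_legendre (tau : R -> R) (alpha Tstar : R) : Prop :=
  (forall q, 0 < q -> Tstar <= alpha * q - tau q) /\
  (forall b, (forall q, 0 < q -> b <= alpha * q - tau q) -> b <= Tstar).

(* sum over a collection (list of indices k of D_{s+m}) of mu(J)^q *)
Definition coll_sum (mu : (R -> Prop) -> R) (q : R) (sm : nat) (D : list Z) : R :=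
  fold_right (fun k acc => rpow (mu (dyad sm k)) q + acc) 0 D.

(* (ii): iterating the self-similarity k times, with lam^k about half the
   length of I in D_s, writes mu on I as a combination of copies of mu scaled
   by lam^k.  Only copies meeting I contribute, they live in 2I, so their total
   weight is at most mu(2I).  Jensen's inequality for t |-> t^q then bounds the
   sum of mu(J)^q over the children J of I in D_(s+m) by mu(2I)^q times 2^q
   and the q-moment sum of mu at a level coarser by a constant number of
   generations, which the liminf defining tau(q) controls.

   (i): by Hölder's inequality, the q-th power sum over N intervals, raised to
   the power (q+h)/q, is at most N^(h/q) times their (q+h)-th power sum, which
   (ii) at the exponent q + h bounds.  Since tau(q+h) - tau(q) is nearly
   alpha h and tau*(alpha) <= alpha q - tau(q), the factor N^(h/q) with
   N <= 2^((tau*(alpha)-kappa) m) is beaten by a gain 2^(-eta m). *)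

From Stdlib Require Import Reals ZArith List Lra Lia.
From Stdlib Require Import FunctionalExtensionality PropExtensionality Classical.
Open Scope R_scope.

Lemma Rdiv_nonneg a b : 0 <= a -> 0 < b -> 0 <= a / b.
Proof. intros Ha Hb; apply Rmult_le_pos; [lra | left; apply Rinv_0_lt_compat, Hb]. Qed.

Lemma Rdiv_le_iff y x h : 0 < h -> (y / h <= x <-> y <= x * h).
Proof.
  intro Hh; split; intro H.
  - apply Rmult_le_reg_r with (/ h); [apply Rinv_0_lt_compat; auto|].
    rewrite Rmult_assoc, Rinv_r, Rmult_1_r by lra. exact H.
  - apply Rmult_le_reg_r with h; auto.
    unfold Rdiv; rewrite Rmult_assoc, Rinv_l, Rmult_1_r by lra. exact H.
Qed.

Lemma Rlt_div_iff y x h : 0 < h -> (x < y / h <-> x * h < y).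
Proof.
  intro Hh; split; intro H.
  - apply Rmult_lt_reg_r with (/ h); [apply Rinv_0_lt_compat; auto|].
    rewrite Rmult_assoc, Rinv_r, Rmult_1_r by lra. exact H.
  - apply Rmult_lt_reg_r with h; auto.
    unfold Rdiv; rewrite Rmult_assoc, Rinv_l, Rmult_1_r by lra. exact H.
Qed.

Lemma Rdiv_lt_iff y x h : 0 < h -> (y / h < x <-> y < x * h).
Proof.
  intro Hh; split; intro H.
  - apply Rmult_lt_reg_r with (/ h); [apply Rinv_0_lt_compat; auto|].
    rewrite Rmult_assoc, Rinv_r, Rmult_1_r by lra. exact H.
  - apply Rmult_lt_reg_r with h; auto.
    unfold Rdiv; rewrite Rmult_assoc, Rinv_l, Rmult_1_r by lra. exact H.
Qed.

Lemma rpow_ge0 x q : 0 <= rpow x q.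
Proof. unfold rpow; destruct (Rlt_dec 0 x); [left; apply exp_pos | lra]. Qed.

Lemma rpow_Rpower x q : 0 < x -> rpow x q = Rpower x q.
Proof. intro Hx; unfold rpow; destruct (Rlt_dec 0 x); [reflexivity | lra]. Qed.

Lemma rpow_gt0 x q : 0 < x -> 0 < rpow x q.
Proof. intro Hx; rewrite rpow_Rpower by lra; apply exp_pos. Qed.

Lemma rpow_le0 x q : x <= 0 -> rpow x q = 0.
Proof. intro Hx; unfold rpow; destruct (Rlt_dec 0 x); [lra | reflexivity]. Qed.

Lemma rpow_le x y q : 0 <= q -> 0 <= x <= y -> rpow x q <= rpow y q.
Proof.
  intros Hq [Hx Hxy]. destruct (Req_dec x 0) as [->|Hx0].
  - rewrite rpow_le0 by lra; apply rpow_ge0.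
  - rewrite !rpow_Rpower by lra. apply Rle_Rpower_l; lra.
Qed.

Lemma rpow_lt x y q : 0 < q -> 0 <= x < y -> rpow x q < rpow y q.
Proof.
  intros Hq [Hx Hxy]. destruct (Req_dec x 0) as [->|Hx0].
  - rewrite rpow_le0 by lra; apply rpow_gt0; lra.
  - rewrite !rpow_Rpower by lra. apply Rlt_Rpower_l; lra.
Qed.

Lemma rpow_le_inv x y q : 0 < q -> 0 <= x -> rpow y q <= rpow x q -> y <= x.
Proof.
  intros Hq Hx H. destruct (Rle_dec y x) as [|Hyx]; [assumption|].
  pose proof (rpow_lt x y q Hq ltac:(lra)). lra.
Qed.

Lemma rpow_mul x y q : 0 <= x -> 0 <= y -> rpow (x * y) q = rpow x q * rpow y q.
Proof.
  intros Hx Hy. destruct (Req_dec x 0) as [->|Hx0].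
  { rewrite Rmult_0_l, rpow_le0 by lra; lra. }
  destruct (Req_dec y 0) as [->|Hy0].
  { rewrite Rmult_0_r, (rpow_le0 0) by lra; lra. }
  assert (0 < x * y) by (apply Rmult_lt_0_compat; lra).
  rewrite !rpow_Rpower by lra. symmetry; apply Rpower_mult_distr; lra.
Qed.

Lemma rpow_rpow x q r : rpow (rpow x q) r = rpow x (q * r).
Proof.
  destruct (Rlt_dec 0 x).
  - rewrite (rpow_Rpower x q), (rpow_Rpower x (q * r)), rpow_Rpower by (try apply exp_pos; lra).
    apply Rpower_mult.
  - rewrite (rpow_le0 x q), !rpow_le0 by lra; reflexivity.
Qed.

Lemma Rpower_1_l r : Rpower 1 r = 1.
Proof. unfold Rpower; rewrite ln_1, Rmult_0_r; apply exp_0. Qed.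

Lemma rpow_le_self x q : 1 <= q -> 0 <= x <= 1 -> rpow x q <= x.
Proof.
  intros Hq [Hx0 Hx1]. destruct (Req_dec x 0) as [->|Hx]; [rewrite rpow_le0; lra|].
  rewrite rpow_Rpower by lra.
  pose proof (Rle_Rpower_l x 1 (q - 1) ltac:(lra) ltac:(lra)) as H.
  rewrite Rpower_1_l in H.
  replace q with (1 + (q - 1)) by ring. rewrite Rpower_plus, Rpower_1 by lra.
  assert (0 < Rpower x (q - 1)) by apply exp_pos. nra.
Qed.

(** * Convexity of [rpow] *)

Lemma rpow_bernoulli z r : 1 <= r -> 0 <= z -> 1 + r * (z - 1) <= rpow z r.
Proof.
  intros Hr Hz.
  set (f := fun x => Rpower x r - r * x).
  assert (Hd : forall c, 0 < c -> derivable_pt_lim f c (r * Rpower c (r - 1) - r * 1)).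
  { intros c Hc. apply (derivable_pt_lim_minus (fun x => Rpower x r) (fun x => r * x)).
    - apply derivable_pt_lim_power; lra.
    - apply (derivable_pt_lim_scal id r c 1), derivable_pt_lim_id. }
  destruct (Req_dec z 0) as [->|Hz0]; [rewrite rpow_le0 by lra; lra|].
  rewrite rpow_Rpower by lra.
  destruct (Rtotal_order z 1) as [Hlt|[->|Hgt]].
  - destruct (MVT_cor2 f (fun c => r * Rpower c (r - 1) - r * 1) z 1 Hlt) as [c [Hc1 Hc2]]; [intros c Hc; apply Hd; lra|].
    pose proof (Rle_Rpower_l c 1 (r - 1) ltac:(lra) ltac:(lra)) as Hpow.
    unfold f in Hc1. rewrite Rpower_1_l in Hc1, Hpow.
    assert (0 <= (1 - Rpower c (r - 1)) * (1 - z)) by (apply Rmult_le_pos; lra). nra.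
  - rewrite Rpower_1_l; lra.
  - destruct (MVT_cor2 f (fun c => r * Rpower c (r - 1) - r * 1) 1 z Hgt) as [c [Hc1 Hc2]]; [intros c Hc; apply Hd; lra|].
    pose proof (Rle_Rpower c 0 (r - 1) ltac:(lra) ltac:(lra)) as Hpow.
    rewrite Rpower_O in Hpow by lra.
    unfold f in Hc1. rewrite Rpower_1_l in Hc1.
    assert (0 <= (Rpower c (r - 1) - 1) * (z - 1)) by (apply Rmult_le_pos; lra). nra.
Qed.

Lemma rpow_tangent y a r : 1 <= r -> 0 < y -> 0 <= a ->
  rpow y r + r * rpow y r * ((a - y) / y) <= rpow a r.
Proof.
  intros Hr Hy Ha.
  assert (Hay : 0 <= a / y) by (apply Rdiv_nonneg; lra).
  pose proof (rpow_bernoulli (a / y) r Hr Hay) as B.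
  assert (E : rpow a r = rpow (a / y) r * rpow y r).
  { rewrite <- rpow_mul by lra. f_equal. field; lra. }
  rewrite E. pose proof (rpow_gt0 y r Hy).
  replace ((a - y) / y) with (a / y - 1) by (field; lra). nra.
Qed.

Lemma rpow_add_ge a b q : 1 <= q -> 0 <= a -> 0 <= b -> rpow a q + rpow b q <= rpow (a + b) q.
Proof.
  intros Hq Ha Hb. destruct (Req_dec (a + b) 0) as [E|E].
  { replace a with 0 by lra; replace b with 0 by lra. rewrite !rpow_le0; lra. }
  assert (Hs : 0 < a + b) by lra.
  assert (Hsplit : forall c, 0 <= c <= a + b -> rpow c q <= c / (a + b) * rpow (a + b) q).
  { intros c Hc.
    replace (rpow c q) with (rpow (c / (a + b)) q * rpow (a + b) q)
      by (rewrite <- rpow_mul by (try apply Rdiv_nonneg; lra); f_equal; field; lra).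
    apply Rmult_le_compat_r; [apply rpow_ge0|]. apply rpow_le_self; [assumption|].
    split; [apply Rdiv_nonneg; lra|]. apply Rdiv_le_iff; lra. }
  pose proof (Hsplit a ltac:(lra)). pose proof (Hsplit b ltac:(lra)).
  assert (a / (a + b) + b / (a + b) = 1) by (field; lra).
  pose proof (rpow_ge0 (a + b) q). nra.
Qed.

Lemma rpow_add_le a b q : 0 < q -> 0 <= a -> 0 <= b ->
  rpow (a + b) q <= rpow 2 q * (rpow a q + rpow b q).
Proof.
  intros Hq Ha Hb.
  assert (H : forall x y, 0 <= y <= x -> rpow (x + y) q <= rpow 2 q * (rpow x q + rpow y q)).
  { intros x y Hxy. apply Rle_trans with (rpow (2 * x) q); [apply rpow_le; lra|].
    rewrite rpow_mul by lra. pose proof (rpow_ge0 y q). pose proof (rpow_ge0 2 q). nra. }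
  destruct (Rle_dec b a); [apply H; lra|].
  rewrite Rplus_comm, (Rplus_comm (rpow a q)). apply H; lra.
Qed.

Lemma fsum_plus f g n : fsum (fun i => f i + g i) n = fsum f n + fsum g n.
Proof. induction n; simpl; [lra | rewrite IHn; lra]. Qed.

Lemma fsum_scal f c n : fsum (fun i => c * f i) n = c * fsum f n.
Proof. induction n; simpl; [lra | rewrite IHn; lra]. Qed.

Lemma fsum_le f g n : (forall i, (i < n)%nat -> f i <= g i) -> fsum f n <= fsum g n.
Proof.
  induction n; simpl; intro H; [lra|].
  assert (fsum f n <= fsum g n) by (apply IHn; intros; apply H; lia).
  assert (f n <= g n) by (apply H; lia). lra.
Qed.

Lemma fsum_ext f g n : (forall i, (i < n)%nat -> f i = g i) -> fsum f n = fsum g n.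
Proof. intro H; apply Rle_antisym; apply fsum_le; intros i Hi; rewrite H; auto; lra. Qed.

Lemma fsum_const0 n : fsum (fun _ => 0) n = 0.
Proof. induction n; simpl; [lra | rewrite IHn; lra]. Qed.

Lemma fsum_ge0 f n : (forall i, (i < n)%nat -> 0 <= f i) -> 0 <= fsum f n.
Proof. intro H. rewrite <- (fsum_const0 n). apply fsum_le; auto. Qed.

Lemma fsum_swap (F : nat -> nat -> R) N M :
  fsum (fun r => fsum (fun i => F r i) N) M = fsum (fun i => fsum (fun r => F r i) M) N.
Proof.
  induction M; simpl; [symmetry; apply fsum_const0|].
  rewrite IHM, <- fsum_plus. reflexivity.
Qed.

Lemma fsum_tail f N n : (forall k, (k >= N)%nat -> f k = 0) -> (n >= N)%nat -> fsum f n = fsum f N.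
Proof.
  intros H. induction n; intro Hn; [replace N with 0%nat by lia; reflexivity|].
  destruct (Nat.eq_dec (S n) N) as [<-|]; [reflexivity|].
  simpl. rewrite IHn, H by lia. lra.
Qed.

Lemma fsum_term_le f n a : (forall i, (i < n)%nat -> 0 <= f i) -> (a < n)%nat -> f a <= fsum f n.
Proof.
  induction n; intros H Ha; [lia|]. simpl.
  assert (0 <= f n) by (apply H; lia).
  assert (0 <= fsum f n) by (apply fsum_ge0; intros; apply H; lia).
  destruct (Nat.eq_dec a n) as [->|]; [lra|].
  assert (f a <= fsum f n) by (apply IHn; [intros; apply H|]; lia). lra.
Qed.

Lemma fsum_two_terms_le f n a b : (forall i, (i < n)%nat -> 0 <= f i) ->
  (a < n)%nat -> (b < n)%nat -> a <> b -> f a + f b <= fsum f n.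
Proof.
  induction n; intros H Ha Hb Hab; [lia|]. simpl.
  assert (0 <= f n) by (apply H; lia).
  destruct (Nat.eq_dec a n) as [->|].
  { assert (f b <= fsum f n) by (apply fsum_term_le; [intros; apply H|]; lia). lra. }
  destruct (Nat.eq_dec b n) as [->|].
  { assert (f a <= fsum f n) by (apply fsum_term_le; [intros; apply H|]; lia). lra. }
  assert (f a + f b <= fsum f n) by (apply IHn; [intros; apply H|..]; lia). lra.
Qed.

Lemma consecutive_terms_le_fsum (g : Z -> R) N z : (forall w, 0 <= g w) ->
  (forall w, (w < 0)%Z \/ (Z.of_nat N <= w)%Z -> g w = 0) ->
  g z + g (z + 1)%Z <= fsum (fun i => g (Z.of_nat i)) N.
Proof.
  intros Hg H0.
  assert (Hs : 0 <= fsum (fun i => g (Z.of_nat i)) N) by (apply fsum_ge0; auto).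
  assert (Hone : forall w, (0 <= w < Z.of_nat N)%Z -> g w <= fsum (fun i => g (Z.of_nat i)) N).
  { intros w Hw. replace w with (Z.of_nat (Z.to_nat w)) by lia.
    apply (fsum_term_le (fun i => g (Z.of_nat i))); auto. lia. }
  assert (Hle : forall w, g w <= fsum (fun i => g (Z.of_nat i)) N).
  { intro w. destruct (Z_lt_le_dec w 0); [rewrite H0 by lia; lra|].
    destruct (Z_lt_le_dec w (Z.of_nat N)); [apply Hone; lia | rewrite H0 by lia; lra]. }
  destruct (Z_lt_le_dec z 0) as [Hz|Hz]; [rewrite (H0 z) by lia; pose proof (Hle (z + 1)%Z); lra|].
  destruct (Z_lt_le_dec (z + 1) (Z.of_nat N)) as [Hz1|Hz1];
    [|rewrite (H0 (z + 1)%Z) by lia; pose proof (Hle z); lra].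
  replace z with (Z.of_nat (Z.to_nat z)) by lia.
  replace (Z.of_nat (Z.to_nat z) + 1)%Z with (Z.of_nat (S (Z.to_nat z))) by lia.
  apply (fsum_two_terms_le (fun i => g (Z.of_nat i))); auto; lia.
Qed.

Lemma fsum_rpow_le f n q : 1 <= q -> (forall i, (i < n)%nat -> 0 <= f i) ->
  fsum (fun i => rpow (f i) q) n <= rpow (fsum f n) q.
Proof.
  intros Hq; induction n; intro H; simpl; [rewrite rpow_le0; lra|].
  assert (fsum (fun i => rpow (f i) q) n <= rpow (fsum f n) q) by (apply IHn; intros; apply H; lia).
  assert (rpow (fsum f n) q + rpow (f n) q <= rpow (fsum f n + f n) q).
  { apply rpow_add_ge; [auto | apply fsum_ge0; intros; apply H; lia | apply H; lia]. }
  lra.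
Qed.

Definition sumL {X} (g : X -> R) (L : list X) : R :=
  fold_right (fun x acc => g x + acc) 0 L.

Lemma sumL_plus {X} (f g : X -> R) L : sumL (fun x => f x + g x) L = sumL f L + sumL g L.
Proof. induction L; simpl; [lra | rewrite IHL; lra]. Qed.

Lemma sumL_scal {X} (f : X -> R) c L : sumL (fun x => c * f x) L = c * sumL f L.
Proof. induction L; simpl; [lra | rewrite IHL; lra]. Qed.

Lemma sumL_le {X} (f g : X -> R) L : (forall x, In x L -> f x <= g x) -> sumL f L <= sumL g L.
Proof.
  induction L; simpl; intros H; [lra|].
  pose proof (H a (or_introl eq_refl)).
  assert (sumL f L <= sumL g L) by (apply IHL; auto). lra.
Qed.

Lemma sumL_ge0 {X} (f : X -> R) L : (forall x, In x L -> 0 <= f x) -> 0 <= sumL f L.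
Proof.
  induction L; simpl; intro H; [lra|].
  pose proof (H a (or_introl eq_refl)). assert (0 <= sumL f L) by auto. lra.
Qed.

Lemma sumL_ext {X} (f g : X -> R) L : (forall x, In x L -> f x = g x) -> sumL f L = sumL g L.
Proof. intro H; apply Rle_antisym; apply sumL_le; intros x Hx; rewrite H; auto; lra. Qed.

Lemma sumL_mul_eq0 {X} (c a : X -> R) L : (forall x, In x L -> 0 <= c x) -> sumL c L = 0 ->
  sumL (fun x => c x * a x) L = 0.
Proof.
  induction L as [|x0 L IH]; simpl; intros H1 H2; [reflexivity|].
  assert (0 <= c x0) by auto. assert (0 <= sumL c L) by (apply sumL_ge0; auto).
  assert (Hx0 : c x0 = 0) by lra. rewrite Hx0, IH; auto; lra.
Qed.

Lemma sumL_app {X} (g : X -> R) L1 L2 : sumL g (L1 ++ L2) = sumL g L1 + sumL g L2.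
Proof. induction L1; simpl; [lra | rewrite IHL1; lra]. Qed.

Lemma sumL_flat_map {X Y} (g : Y -> R) (F : X -> list Y) L :
  sumL g (flat_map F L) = sumL (fun x => sumL g (F x)) L.
Proof. induction L; simpl; [reflexivity|]. rewrite sumL_app, IHL. reflexivity. Qed.

Lemma sumL_map_seq {X} (g : X -> R) (f : nat -> X) n :
  sumL g (map f (seq 0 n)) = fsum (fun i => g (f i)) n.
Proof. induction n; [reflexivity|]. rewrite seq_S, map_app, sumL_app, IHn. simpl. lra. Qed.

Lemma sumL_const1 {X} (L : list X) : sumL (fun _ => 1) L = INR (length L).
Proof. induction L; simpl; [reflexivity|]. rewrite IHL. destruct (length L); simpl; lra. Qed.

Lemma sumL_fsum_swap {X} (F : X -> nat -> R) L N :
  sumL (fun x => fsum (F x) N) L = fsum (fun r => sumL (fun x => F x r) L) N.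
Proof.
  induction L; simpl; [symmetry; apply fsum_const0|].
  rewrite IHL, <- fsum_plus. reflexivity.
Qed.

Lemma sumL_filter_split {X} (g : X -> R) (P : X -> bool) l :
  sumL g l = sumL g (filter P l) + sumL g (filter (fun x => negb (P x)) l).
Proof. induction l; simpl; [lra|]. destruct (P a); simpl; rewrite IHl; lra. Qed.

Lemma sumL_le_fsum_range (f : Z -> R) base N : (forall k, 0 <= f k) ->
  forall D, NoDup D -> (forall k, In k D -> (base <= k < base + Z.of_nat N)%Z) ->
  sumL f D <= fsum (fun r => f (base + Z.of_nat r)%Z) N.
Proof.
  intros Hf. induction N; intros D Hnd HD.
  - destruct D as [|k D]; [simpl; lra|]. specialize (HD k (or_introl eq_refl)). lia.
  - set (x := (base + Z.of_nat N)%Z).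
    rewrite (sumL_filter_split f (Z.eqb x)). simpl.
    assert (Hx : sumL f (filter (Z.eqb x) D) <= f x).
    { assert (Hall : forall y, In y (filter (Z.eqb x) D) -> y = x)
        by (intros y Hy; apply filter_In in Hy; symmetry; apply Z.eqb_eq, Hy).
      pose proof (NoDup_filter (Z.eqb x) Hnd) as Hnd'.
      destruct (filter (Z.eqb x) D) as [|y [|z l]]; simpl.
      - apply Hf.
      - rewrite (Hall y) by (simpl; auto). lra.
      - exfalso. inversion Hnd'; subst. apply H1. rewrite (Hall y), (Hall z) by (simpl; auto). simpl; auto. }
    assert (sumL f (filter (fun y => negb (Z.eqb x y)) D) <= fsum (fun r => f (base + Z.of_nat r)%Z) N).
    { apply IHN; [apply NoDup_filter; auto|].
      intros k Hk. apply filter_In in Hk. destruct Hk as [Hk Hk2].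
      specialize (HD k Hk). apply Bool.negb_true_iff, Z.eqb_neq in Hk2. unfold x in Hk2. lia. }
    fold x. lra.
Qed.

Lemma sumL_rpow_jensen {X} (c a : X -> R) r L : 1 <= r ->
  (forall x, In x L -> 0 <= c x) -> (forall x, In x L -> 0 <= a x) ->
  sumL c L * rpow (sumL (fun x => c x * a x) L) r
  <= rpow (sumL c L) r * sumL (fun x => c x * rpow (a x) r) L.
Proof.
  intros Hr Hc Ha.
  set (P := sumL c L). set (Q := sumL (fun x => c x * a x) L).
  assert (HP : 0 <= P) by (apply sumL_ge0; auto).
  assert (HQ : 0 <= Q) by (apply sumL_ge0; intros; apply Rmult_le_pos; auto).
  assert (HR : 0 <= sumL (fun x => c x * rpow (a x) r) L)
    by (apply sumL_ge0; intros; apply Rmult_le_pos; auto; apply rpow_ge0).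
  destruct (Req_dec P 0) as [HP0|HP0].
  { rewrite HP0, Rmult_0_l. apply Rmult_le_pos; auto; apply rpow_ge0. }
  destruct (Req_dec Q 0) as [HQ0|HQ0].
  { rewrite HQ0, rpow_le0, Rmult_0_r by lra. apply Rmult_le_pos; auto; apply rpow_ge0. }
  (* integrate the tangent line of [rpow _ r] at the barycenter [y] *)
  set (y := Q / P). assert (Hy : 0 < y) by (apply Rdiv_lt_0_compat; lra).
  set (Y := rpow y r).
  assert (H1 : sumL (fun x => c x * (Y + r * Y * ((a x - y) / y))) L
               <= sumL (fun x => c x * rpow (a x) r) L).
  { apply sumL_le; intros x Hx. apply Rmult_le_compat_l; auto. apply rpow_tangent; auto. }
  assert (H2 : sumL (fun x => c x * (Y + r * Y * ((a x - y) / y))) L = P * Y).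
  { rewrite (sumL_ext _ (fun x => (Y - r * Y) * c x + (r * Y / y) * (c x * a x))).
    - rewrite sumL_plus, !sumL_scal. fold P Q. unfold y. field. split; lra.
    - intros x _. field. lra. }
  assert (HQe : Q = P * y) by (unfold y; field; lra).
  rewrite HQe, rpow_mul by lra. fold Y.
  assert (0 <= rpow P r) by apply rpow_ge0. nra.
Qed.

Lemma sumL_rpow_power_mean {X} (b : X -> R) r L : 1 <= r -> (forall x, 0 <= b x) ->
  rpow (sumL b L) r <= rpow (INR (length L)) (r - 1) * sumL (fun x => rpow (b x) r) L.
Proof.
  intros Hr Hb.
  destruct L as [|x0 L0]; [simpl; rewrite rpow_le0 by lra; lra|].
  set (L := x0 :: L0). set (N := INR (length L)).
  assert (HN : 0 < N) by (apply lt_0_INR; simpl; lia).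
  pose proof (sumL_rpow_jensen (fun _ => 1) b r L Hr ltac:(intros; lra) ltac:(intros; apply Hb)) as J.
  rewrite sumL_const1 in J. fold N in J.
  rewrite (sumL_ext (fun x => 1 * b x) b), (sumL_ext (fun x => 1 * rpow (b x) r) (fun x => rpow (b x) r))
    in J by (intros; ring).
  assert (HrN : rpow N r = N * rpow N (r - 1)).
  { rewrite !rpow_Rpower by lra. replace r with (1 + (r - 1)) at 1 by ring.
    rewrite Rpower_plus, Rpower_1 by lra. reflexivity. }
  rewrite HrN, Rmult_assoc in J. apply Rmult_le_reg_l with N; assumption.
Qed.

Lemma set_ext (A B : R -> Prop) : (forall x, A x <-> B x) -> A = B.
Proof. intro H; apply functional_extensionality; intro x; apply propositional_extensionality; auto. Qed.

Lemma borel_ext A B : borel A -> (forall x, A x <-> B x) -> borel B.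
Proof. intros H E; rewrite <- (set_ext A B E); auto. Qed.

Lemma borel_empty : borel (fun _ => False).
Proof. apply borel_ext with (fun x => 0 < x < 0); [constructor | intros; split; [lra | tauto]]. Qed.

Lemma borel_prop (P : Prop) A : borel A -> borel (fun x => P /\ A x).
Proof.
  intro H. destruct (classic P).
  - apply borel_ext with A; auto; intros; tauto.
  - apply borel_ext with (fun _ => False); [apply borel_empty | intros; tauto].
Qed.

Lemma borel_union A B : borel A -> borel B -> borel (fun x => A x \/ B x).
Proof.
  intros HA HB.
  apply borel_ext with (fun x => exists n, (fun n x => if Nat.eq_dec n 0 then A x else B x) n x).
  - apply borel_cunion. intro n. destruct (Nat.eq_dec n 0); auto.
  - intro x; split.
    + intros [n Hn]. destruct (Nat.eq_dec n 0); tauto.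
    + intros [H|H]; [exists 0%nat | exists 1%nat]; simpl; auto.
Qed.

Lemma borel_inter A B : borel A -> borel B -> borel (fun x => A x /\ B x).
Proof.
  intros HA HB.
  apply borel_ext with (fun x => ~ (fun x => ~ A x \/ ~ B x) x).
  - apply borel_compl, borel_union; apply borel_compl; auto.
  - intro x; split; intros; [|tauto]. destruct (classic (A x)), (classic (B x)); tauto.
Qed.

Lemma borel_diff A B : borel A -> borel B -> borel (fun x => A x /\ ~ B x).
Proof. intros; apply borel_inter; [|apply borel_compl]; auto. Qed.

Lemma borel_Iio b : borel (fun x => x < b).
Proof.
  apply borel_ext with (fun x => exists n, (fun n x => b - INR n - 1 < x < b) n x).
  - apply borel_cunion; intro; constructor.
  - intro x; split; [intros [n Hn]; lra|].
    intro Hx. destruct (archimed (b - x)) as [H1 H2].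
    assert (0 <= IZR (up (b - x))) by lra.
    exists (Z.to_nat (up (b - x))). rewrite INR_IZR_INZ, Z2Nat.id; [lra|].
    apply le_IZR; assumption.
Qed.

Lemma borel_Ico a b : borel (fun x => a <= x < b).
Proof.
  apply borel_ext with (fun x => (fun x => x < b) x /\ ~ (fun x => x < a) x).
  - apply borel_diff; apply borel_Iio.
  - intro; lra.
Qed.

Lemma borel_affine A a b : borel A -> 0 < a -> borel (fun x => A (a * x + b)).
Proof.
  intros HA; revert a b; induction HA as [c d| |]; intros a b Ha.
  - apply borel_ext with (fun x => (c - b) / a < x < (d - b) / a); [constructor|].
    intro x. rewrite Rlt_div_iff, Rdiv_lt_iff by lra. lra.
  - apply (borel_compl (fun x => A (a * x + b))); auto.
  - apply (borel_cunion (fun n x => A n (a * x + b))); auto.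
Qed.

Lemma measure_ext (mu : (R -> Prop) -> R) (A B : R -> Prop) :
  (forall x, A x <-> B x) -> mu A = mu B.
Proof. intro H; rewrite (set_ext A B H); reflexivity. Qed.

Lemma infinite_sum_eventually_const (s : nat -> R) l C N :
  infinite_sum s l -> (forall n, (n >= N)%nat -> sum_f_R0 s n = C) -> l = C.
Proof.
  intros Hs HC. destruct (Req_dec l C) as [|Hne]; auto.
  destruct (Hs (Rabs (l - C))) as [N1 HN1]; [apply Rabs_pos_lt; lra|].
  specialize (HN1 (max N N1) (Nat.le_max_r _ _)). rewrite HC in HN1 by lia.
  unfold R_dist in HN1. rewrite Rabs_minus_sym in HN1. lra.
Qed.

Lemma sum_f_R0_fsum f n : sum_f_R0 f n = fsum f (S n).
Proof. induction n; simpl; [lra | rewrite IHn; reflexivity]. Qed.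

Section ProbabilityMeasure.

Variable mu : (R -> Prop) -> R.
Hypothesis Hmu : is_prob_measure mu.

Lemma measure_ge0 A : borel A -> 0 <= mu A.
Proof. apply (pm_nonneg mu Hmu). Qed.

Lemma measure_empty : mu (fun _ => False) = 0.
Proof.
  set (e := mu (fun _ => False)).
  assert (H : infinite_sum (fun _ => e) e).
  { unfold e at 2. rewrite (measure_ext mu (fun _ => False) (fun x => exists n : nat, False))
      by (intro; split; [tauto | intros [_ []]]).
    apply (pm_sigma_add mu Hmu (fun _ _ => False)); [intro; apply borel_empty | tauto]. }
  assert (Hsum : forall n, sum_f_R0 (fun _ => e) n = INR (S n) * e).
  { induction n; simpl; [lra|]. rewrite IHn. destruct n; simpl; lra. }
  (* the constant series [e + e + ...] converges to [e] only if [e = 0] *)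
  destruct (Req_dec e 0) as [|He]; [assumption|].
  assert (Habs : 0 < Rabs e) by (apply Rabs_pos_lt; auto).
  destruct (H (Rabs e / 2)) as [N HN]; [lra|].
  specialize (HN (S N) (le_S _ _ (le_n _))). unfold R_dist in HN. rewrite Hsum in HN.
  replace (INR (S (S N)) * e - e) with (INR (S N) * e) in HN by (rewrite (S_INR (S N)); lra).
  rewrite Rabs_mult, Rabs_pos_eq in HN by apply pos_INR.
  assert (1 <= INR (S N)) by (rewrite S_INR; pose proof (pos_INR N); lra). nra.
Qed.

Lemma measure_fsum_disjoint (B : nat -> R -> Prop) N :
  (forall r, borel (B r)) ->
  (forall r r' x, (r < N)%nat -> (r' < N)%nat -> r <> r' -> B r x -> B r' x -> False) ->
  mu (fun x => exists r, (r < N)%nat /\ B r x) = fsum (fun r => mu (B r)) N.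
Proof.
  intros HB Hd.
  assert (H : infinite_sum (fun n => mu (fun x => (n < N)%nat /\ B n x))
                (mu (fun x => exists n, (n < N)%nat /\ B n x))).
  { apply (pm_sigma_add mu Hmu (fun n x => (n < N)%nat /\ B n x)).
    - intro n; apply borel_prop; auto.
    - intros n k x Hnk [] []; eauto. }
  apply (infinite_sum_eventually_const _ _ _ N H). intros n Hn. rewrite sum_f_R0_fsum.
  rewrite (fsum_tail _ N) by (try lia; intros k Hk;
    rewrite (measure_ext mu _ (fun _ => False)) by (intro; lia); apply measure_empty).
  apply fsum_ext. intros i Hi. apply measure_ext. intro; tauto.
Qed.

Lemma measure_union_disjoint A B : borel A -> borel B -> (forall x, A x -> B x -> False) ->
  mu (fun x => A x \/ B x) = mu A + mu B.
Proof.
  intros HA HB Hd.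
  set (F := fun r => if Nat.eq_dec r 0 then A else B).
  rewrite (measure_ext mu _ (fun x => exists r, (r < 2)%nat /\ F r x)).
  - rewrite measure_fsum_disjoint; [unfold F; simpl; lra|..].
    + intro r; unfold F; destruct (Nat.eq_dec r 0); auto.
    + intros r r' x Hr Hr' Hne. unfold F.
      destruct (Nat.eq_dec r 0), (Nat.eq_dec r' 0); try lia; eauto.
  - intro x; unfold F; split.
    + intros [Hx|Hx]; [exists 0%nat | exists 1%nat]; simpl; auto.
    + intros [r [Hr Hx]]. destruct (Nat.eq_dec r 0); auto.
Qed.

Lemma measure_le A B : borel A -> borel B -> (forall x, A x -> B x) -> mu A <= mu B.
Proof.
  intros HA HB Hs.
  rewrite (measure_ext mu B (fun x => A x \/ (B x /\ ~ A x))).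
  - rewrite measure_union_disjoint; [|auto | apply borel_diff; auto | intros x ? []; auto].
    pose proof (measure_ge0 (fun x => B x /\ ~ A x) (borel_diff _ _ HB HA)). lra.
  - intro x; split; [intro; destruct (classic (A x)); tauto | intros [|[]]; auto].
Qed.

Lemma measure_subadd A B C : borel A -> borel B -> borel C ->
  (forall x, A x -> B x \/ C x) -> mu A <= mu B + mu C.
Proof.
  intros HA HB HC Hs.
  apply Rle_trans with (mu (fun x => B x \/ (C x /\ ~ B x))).
  - apply measure_le; auto; [apply borel_union; auto; apply borel_diff; auto|].
    intros x Hx; destruct (Hs x Hx); [left|]; auto; destruct (classic (B x)); tauto.
  - rewrite measure_union_disjoint; [|auto | apply borel_diff; auto | intros x ? []; auto].
    assert (mu (fun x => C x /\ ~ B x) <= mu C) by (apply measure_le; [apply borel_diff| |]; auto; tauto).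
    lra.
Qed.

Hypothesis Hsupp : mu (fun x => 0 <= x < 1) = 1.

Lemma measure_off_unit A : borel A -> (forall x, A x -> ~ (0 <= x < 1)) -> mu A = 0.
Proof.
  intros HA Hs.
  assert (E : mu (fun _ => True) = mu (fun x => 0 <= x < 1) + mu (fun x => ~ (0 <= x < 1))).
  { rewrite <- measure_union_disjoint;
      [| apply (borel_Ico 0 1) | apply borel_compl, (borel_Ico 0 1) | intros x ? ?; auto].
    apply measure_ext; intro x; split; auto. intros _; apply classic. }
  rewrite (pm_total mu Hmu), Hsupp in E.
  assert (mu A <= mu (fun x => ~ (0 <= x < 1)))
    by (apply measure_le; auto; apply borel_compl, (borel_Ico 0 1)).
  pose proof (measure_ge0 A HA). lra.
Qed.

End ProbabilityMeasure.

(** * Dyadic intervals *)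

Lemma pow2_pos m : 0 < 2 ^ m.
Proof. apply pow_lt; lra. Qed.

Lemma INR_pow2 m : INR (2 ^ m) = 2 ^ m.
Proof. rewrite pow_INR. reflexivity. Qed.

Lemma borel_dyad s j : borel (dyad s j).
Proof. apply borel_Ico. Qed.

Lemma borel_dyad2 s j : borel (dyad2 s j).
Proof. apply borel_Ico. Qed.

Lemma dyad_disjoint m w1 w2 x : dyad m w1 x -> dyad m w2 x -> w1 = w2.
Proof.
  unfold dyad; intros [A1 A2] [B1 B2]. pose proof (pow2_pos m) as Hh.
  apply Rdiv_le_iff in A1, B1; auto. apply Rlt_div_iff in A2, B2; auto.
  assert (H12 : IZR w1 < IZR (w2 + 1)) by (rewrite plus_IZR; lra).
  assert (H21 : IZR w2 < IZR (w1 + 1)) by (rewrite plus_IZR; lra).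
  apply lt_IZR in H12; apply lt_IZR in H21; lia.
Qed.

Lemma dyad_child_sub s m j r x : (r < 2 ^ m)%nat ->
  dyad (s + m) (j * 2 ^ Z.of_nat m + Z.of_nat r) x -> dyad s j x.
Proof.
  intros Hr [H1 H2].
  rewrite plus_IZR, mult_IZR, <- pow_IZR, <- INR_IZR_INZ, pow_add in H1, H2.
  pose proof (pow2_pos s) as A. pose proof (pow2_pos m) as B.
  assert (Hr' : INR r + 1 <= 2 ^ m).
  { rewrite <- S_INR, <- INR_pow2. apply le_INR. lia. }
  pose proof (pos_INR r).
  apply Rdiv_le_iff in H1; [|apply Rmult_lt_0_compat; auto].
  apply Rlt_div_iff in H2; [|apply Rmult_lt_0_compat; auto].
  split.
  - apply Rdiv_le_iff; auto. apply Rmult_le_reg_r with (2 ^ m); auto. nra.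
  - apply Rlt_div_iff; auto. apply Rmult_lt_reg_r with (2 ^ m); auto. nra.
Qed.

Lemma dyad_child_range s m j k : (forall x, dyad (s + m) k x -> dyad s j x) ->
  (j * 2 ^ Z.of_nat m <= k < j * 2 ^ Z.of_nat m + Z.of_nat (2 ^ m))%Z.
Proof.
  intro H. pose proof (pow2_pos s) as Hs. pose proof (pow2_pos m) as Hm.
  assert (Hk : dyad (s + m) k (IZR k / 2 ^ (s + m))).
  { split; [lra|]. unfold Rdiv; apply Rmult_lt_compat_r; [apply Rinv_0_lt_compat, pow2_pos | lra]. }
  destruct (H _ Hk) as [A B].
  set (X := IZR k / 2 ^ (s + m)) in A, B.
  assert (Ek : IZR k = X * 2 ^ s * 2 ^ m) by (unfold X; rewrite pow_add; field; lra).
  apply (proj1 (Rdiv_le_iff _ _ _ Hs)) in A. apply (proj1 (Rlt_div_iff _ _ _ Hs)) in B.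
  assert (Ej : IZR (j * 2 ^ Z.of_nat m) = IZR j * 2 ^ m) by (rewrite mult_IZR, <- pow_IZR; reflexivity).
  assert (En : IZR (Z.of_nat (2 ^ m)) = 2 ^ m) by (rewrite <- INR_IZR_INZ; apply INR_pow2).
  split.
  - apply le_IZR. rewrite Ej, Ek. apply Rmult_le_compat_r; lra.
  - apply lt_IZR. rewrite plus_IZR, Ej, En, Ek.
    replace (IZR j * 2 ^ m + 2 ^ m) with ((IZR j + 1) * 2 ^ m) by ring.
    apply Rmult_lt_compat_r; lra.
Qed.

Lemma floor_exists a : exists z : Z, IZR z <= a < IZR z + 1.
Proof. destruct (archimed a) as [H1 H2]. exists (up a - 1)%Z. rewrite minus_IZR. lra. Qed.

Lemma short_interval_dyad_cover m a : exists z : Z,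
  forall x, a <= x < a + / 2 ^ m -> dyad m z x \/ dyad m (z + 1) x.
Proof.
  pose proof (pow2_pos m) as Hh. set (h := 2 ^ m) in *.
  destruct (floor_exists (a * h)) as [z [Hz1 Hz2]]. exists z.
  intros x [Hx1 Hx2]. unfold dyad. fold h. rewrite plus_IZR.
  assert (IZR z / h <= x) by (apply Rdiv_le_iff; auto; nra).
  assert (x * h < a * h + 1).
  { replace (a * h + 1) with ((a + / h) * h) by (field; lra). apply Rmult_lt_compat_r; auto. }
  destruct (Rlt_dec x ((IZR z + 1) / h)); [left; lra|].
  right. split; [lra|]. apply Rlt_div_iff; auto. lra.
Qed.

Lemma dyad2_neighbourhood s j K y : K <= / 2 ^ (s + 1) ->
  IZR j / 2 ^ s - K < y < (IZR j + 1) / 2 ^ s + K -> dyad2 s j y.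
Proof.
  intros HK [Hy1 Hy2]. pose proof (pow2_pos s) as Hs.
  assert (E : / 2 ^ (s + 1) = / 2 * / 2 ^ s) by (rewrite pow_add, Rinv_mult; simpl; lra).
  unfold dyad2, Rdiv in *. split; nra.
Qed.

Section Moments.

Variable mu : (R -> Prop) -> R.
Hypothesis Hmu : is_prob_measure mu.
Hypothesis Hsupp : mu (fun x => 0 <= x < 1) = 1.

Lemma measure_dyad_off_unit m w B : (w < 0 \/ Z.of_nat (2 ^ m) <= w)%Z -> borel B ->
  mu (fun x => B x /\ dyad m w x) = 0.
Proof.
  intros Hw HB. apply measure_off_unit; auto; [apply borel_inter; auto; apply borel_dyad|].
  intros x [_ [Hx1 Hx2]] [Hx3 Hx4]. pose proof (pow2_pos m) as Hm.
  apply Rdiv_le_iff in Hx1; auto. apply Rlt_div_iff in Hx2; auto.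
  destruct Hw as [Hw|Hw].
  - assert (Hw1 : IZR (w + 1) <= IZR 0) by (apply IZR_le; lia).
    rewrite plus_IZR in Hw1. nra.
  - apply IZR_le in Hw. rewrite <- INR_IZR_INZ, INR_pow2 in Hw. nra.
Qed.

Lemma rpow_measure_short_le q m a B : 0 < q -> borel B ->
  (forall x, B x -> a <= x < a + / 2 ^ m) ->
  rpow (mu B) q <= rpow 2 q * fsum (fun i => rpow (mu (fun x => B x /\ dyad m (Z.of_nat i) x)) q) (2 ^ m).
Proof.
  intros Hq HB HBa.
  destruct (short_interval_dyad_cover m a) as [z Hz].
  set (piece := fun w x => B x /\ dyad m w x).
  assert (Hpiece : forall w, borel (piece w)) by (intro; apply borel_inter; auto; apply borel_dyad).
  assert (Hsub : mu B <= mu (piece z) + mu (piece (z + 1)%Z)).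
  { apply measure_subadd; auto. intros x Hx; destruct (Hz x (HBa x Hx)); [left|right]; split; auto. }
  apply Rle_trans with (rpow (mu (piece z) + mu (piece (z + 1)%Z)) q).
  { apply rpow_le; [lra|]. split; [apply measure_ge0|]; auto. }
  apply Rle_trans with (rpow 2 q * (rpow (mu (piece z)) q + rpow (mu (piece (z + 1)%Z)) q)).
  { apply rpow_add_le; auto; apply measure_ge0; auto. }
  apply Rmult_le_compat_l; [apply rpow_ge0|].
  apply (consecutive_terms_le_fsum (fun w => rpow (mu (piece w)) q)); [intro; apply rpow_ge0|].
  intros w Hw. unfold piece. rewrite measure_dyad_off_unit by auto. apply rpow_le0; lra.
Qed.

Lemma fsum_rpow_measure_disjoint_le q (B : nat -> R -> Prop) N C : 1 <= q ->
  (forall r, borel (B r)) -> borel C ->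
  (forall r r' x, (r < N)%nat -> (r' < N)%nat -> r <> r' -> B r x -> B r' x -> False) ->
  (forall r x, (r < N)%nat -> B r x -> C x) ->
  fsum (fun r => rpow (mu (B r)) q) N <= rpow (mu C) q.
Proof.
  intros Hq HB HC Hd Hsub.
  apply Rle_trans with (rpow (fsum (fun r => mu (B r)) N) q).
  { apply fsum_rpow_le; auto. intros; apply measure_ge0; auto. }
  apply rpow_le; [lra|]. split; [apply fsum_ge0; intros; apply measure_ge0; auto|].
  rewrite <- measure_fsum_disjoint by auto.
  apply measure_le; auto.
  - apply borel_ext with (fun x => exists r, (fun r x => (r < N)%nat /\ B r x) r x); [|tauto].
    apply borel_cunion. intro r; apply borel_prop; auto.
  - intros x [r [Hr Hx]]. eauto.
Qed.

(* Pulling back distinct intervals of [D_(s+m)] by [y |-> K y + u] gives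
   intervals of length at most [2^-m'], each meeting at most two intervals of
   [D_m']; disjoint pullbacks inside one [D_m'] interval add up by
   superadditivity of [rpow _ q]. *)
Lemma pullback_moment_le q s m m' (e : nat -> Z) K u : 1 <= q -> 0 < K ->
  (forall r1 r2, e r1 = e r2 -> r1 = r2) ->
  / (2 ^ (s + m) * K) <= / 2 ^ m' ->
  fsum (fun r => rpow (mu (fun y => dyad (s + m) (e r) (K * y + u))) q) (2 ^ m)
  <= rpow 2 q * moment_sum mu q m'.
Proof.
  intros Hq HK He HKm.
  set (P := fun r y => dyad (s + m) (e r) (K * y + u)).
  assert (HPb : forall r, borel (P r)) by (intro r; apply borel_affine; [apply borel_dyad | auto]).
  pose proof (pow2_pos (s + m)) as HH.
  apply Rle_trans with
    (fsum (fun r => rpow 2 q * fsum (fun i => rpow (mu (fun x => P r x /\ dyad m' (Z.of_nat i) x)) q) (2 ^ m')) (2 ^ m)).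
  { apply fsum_le; intros r Hr.
    apply (rpow_measure_short_le q m' ((IZR (e r) / 2 ^ (s + m) - u) / K)); [lra | apply HPb |].
    intros y [Hy1 Hy2]. split; [apply Rdiv_le_iff; auto; lra|].
    apply Rlt_le_trans with ((IZR (e r) / 2 ^ (s + m) - u) / K + / (2 ^ (s + m) * K)); [|lra].
    apply Rmult_lt_reg_r with K; auto.
    replace (((IZR (e r) / 2 ^ (s + m) - u) / K + / (2 ^ (s + m) * K)) * K)
      with ((IZR (e r) + 1) / 2 ^ (s + m) - u) by (field; lra). lra. }
  rewrite fsum_scal. apply Rmult_le_compat_l; [apply rpow_ge0|].
  rewrite fsum_swap. apply fsum_le. intros i Hi.
  apply fsum_rpow_measure_disjoint_le; auto.
  - intro r; apply borel_inter; auto; apply borel_dyad.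
  - apply borel_dyad.
  - intros r1 r2 x _ _ Hne [Hx1 _] [Hx2 _]. apply Hne, He. eapply dyad_disjoint; eauto.
  - intros r x _ [_ Hx]. exact Hx.
Qed.

End Moments.

(** * Cylinder decomposition of a self-similar measure *)

(* The cylinder [(w, u)] stands for the copy [y |-> K y + u] of [mu] carrying
   weight [w]; it lives on [[u, u + K)].  Its weight counts towards [[a, b)]
   only if it meets that interval. *)
Definition meeting_weight (K a b : R) (x : R * R) : R :=
  if Rlt_dec (snd x) b then if Rlt_dec a (snd x + K) then fst x else 0 else 0.

Section Cylinders.

Variable mu : (R -> Prop) -> R.
Hypothesis Hmu : is_prob_measure mu.
Hypothesis Hsupp : mu (fun x => 0 <= x < 1) = 1.
Variables (K : R) (L : list (R * R)).
Hypothesis HK : 0 < K.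
Hypothesis HL_ge0 : forall x, In x L -> 0 <= fst x.
Hypothesis HL_decomp : forall A, borel A ->
  mu A = sumL (fun x => fst x * mu (fun y => A (K * y + snd x))) L.

Lemma meeting_weight_ge0 a b x : In x L -> 0 <= meeting_weight K a b x.
Proof.
  intro Hx; unfold meeting_weight.
  destruct Rlt_dec; [destruct Rlt_dec|]; auto; lra.
Qed.

Lemma measure_decomp_inside a b A : borel A -> (forall x, A x -> a <= x < b) ->
  mu A = sumL (fun x => meeting_weight K a b x * mu (fun y => A (K * y + snd x))) L.
Proof.
  intros HA Hab. rewrite HL_decomp by auto. apply sumL_ext. intros x Hx. unfold meeting_weight.
  destruct (Rlt_dec (snd x) b); [destruct (Rlt_dec a (snd x + K))|]; [reflexivity|..];
    rewrite (measure_off_unit mu Hmu Hsupp); [ring | apply borel_affine; auto | | ring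
                                            | apply borel_affine; auto |];
    intros y Hy Hy01; pose proof (Hab _ Hy);
    assert (0 <= K * y) by (apply Rmult_le_pos; lra);
    assert (K * y < K) by (rewrite <- (Rmult_1_r K) at 2; apply Rmult_lt_compat_l; lra); lra.
Qed.

Lemma meeting_weight_sum_le a b B : borel B -> (forall y, a - K < y < b + K -> B y) ->
  sumL (meeting_weight K a b) L <= mu B.
Proof.
  intros HB HaBb. rewrite (HL_decomp B HB). apply sumL_le. intros x Hx. unfold meeting_weight.
  pose proof (HL_ge0 x Hx).
  assert (0 <= mu (fun y => B (K * y + snd x))) by (apply measure_ge0, borel_affine; auto).
  destruct (Rlt_dec (snd x) b); [destruct (Rlt_dec a (snd x + K))|]; try nra.
  (* a cylinder meeting [[a, b)] lies in [(a - K, b + K)], so its pullback of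
     [B] has full measure *)
  assert (1 <= mu (fun y => B (K * y + snd x))); [|nra].
  rewrite <- Hsupp. apply measure_le; auto; [apply borel_Ico | apply borel_affine; auto|].
  intros y Hy. apply HaBb.
  assert (0 <= K * y) by (apply Rmult_le_pos; lra).
  assert (K * y < K) by (rewrite <- (Rmult_1_r K) at 2; apply Rmult_lt_compat_l; lra). lra.
Qed.

(* Jensen's inequality over the cylinders meeting [dyad s j], whose total
   weight is at most [mu (dyad2 s j)], reduces the children sum of [dyad s j]
   to moment sums of the rescaled copies of [mu]. *)
Lemma children_moment_le_cylinders q s j m m' : 1 <= q ->
  K <= / 2 ^ (s + 1) -> / (2 ^ (s + m) * K) <= / 2 ^ m' ->
  fsum (fun r => rpow (mu (dyad (s + m) (j * 2 ^ Z.of_nat m + Z.of_nat r))) q) (2 ^ m)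
  <= rpow (mu (dyad2 s j)) q * (rpow 2 q * moment_sum mu q m').
Proof.
  intros Hq HKs HKm.
  set (a := IZR j / 2 ^ s). set (b := (IZR j + 1) / 2 ^ s).
  set (cw := meeting_weight K a b).
  set (J := fun r => dyad (s + m) (j * 2 ^ Z.of_nat m + Z.of_nat r)).
  set (A := fun (x : R * R) r => mu (fun y => J r (K * y + snd x))).
  set (C := rpow 2 q * moment_sum mu q m').
  set (P := sumL cw L).
  assert (HA0 : forall x r, 0 <= A x r) by (intros; apply measure_ge0, borel_affine, HK; auto; apply borel_dyad).
  assert (Hcw0 : forall x, In x L -> 0 <= cw x) by (intros; apply meeting_weight_ge0; auto).
  assert (HP0 : 0 <= P) by (apply sumL_ge0; auto).
  assert (HC0 : 0 <= C) by (apply Rmult_le_pos; [apply rpow_ge0 | apply fsum_ge0; intros; apply rpow_ge0]).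
  assert (HJ : forall r, (r < 2 ^ m)%nat -> mu (J r) = sumL (fun x => cw x * A x r) L).
  { intros r Hr. apply measure_decomp_inside; [apply borel_dyad|].
    intros y Hy. apply (dyad_child_sub s m j r y Hr Hy). }
  assert (HP : P <= mu (dyad2 s j)).
  { apply meeting_weight_sum_le; [apply borel_dyad2|]. intros y Hy. apply (dyad2_neighbourhood s j K); auto. }
  assert (HA : forall x, fsum (fun r => rpow (A x r) q) (2 ^ m) <= C).
  { intro x. apply (pullback_moment_le mu Hmu Hsupp q s m m' (fun r => (j * 2 ^ Z.of_nat m + Z.of_nat r)%Z));
      auto. intros r1 r2 E. lia. }
  assert (Main : P * fsum (fun r => rpow (mu (J r)) q) (2 ^ m) <= rpow P q * (P * C)).
  { rewrite <- fsum_scal.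
    apply Rle_trans with (fsum (fun r => rpow P q * sumL (fun x => cw x * rpow (A x r) q) L) (2 ^ m)).
    { apply fsum_le; intros r Hr. rewrite HJ by auto. apply sumL_rpow_jensen; auto. }
    rewrite fsum_scal, <- sumL_fsum_swap. apply Rmult_le_compat_l; [apply rpow_ge0|].
    apply Rle_trans with (sumL (fun x => C * cw x) L).
    { apply sumL_le; intros x Hx. rewrite fsum_scal, (Rmult_comm C). apply Rmult_le_compat_l; auto. }
    rewrite sumL_scal. unfold P; lra. }
  change (fsum (fun r => rpow (mu (J r)) q) (2 ^ m) <= rpow (mu (dyad2 s j)) q * C).
  destruct (Req_dec P 0) as [HP00|HPpos].
  - rewrite (fsum_ext _ (fun _ => 0)), fsum_const0.
    + apply Rmult_le_pos; [apply rpow_ge0 | assumption].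
    + intros r Hr. rewrite HJ, sumL_mul_eq0 by assumption. apply rpow_le0; lra.
  - apply Rle_trans with (rpow P q * C).
    + apply Rmult_le_reg_l with P; [lra|]. lra.
    + apply Rmult_le_compat_r; auto. apply rpow_le; lra.
Qed.

End Cylinders.

(** * The local moment bound (ii) *)

Lemma wifs_invariant_iter n lam t p mu : 0 < lam -> (forall i, (i < n)%nat -> 0 < p i) ->
  wifs_invariant n lam t p mu ->
  forall k, exists L : list (R * R), (forall x, In x L -> 0 <= fst x) /\
    forall A, borel A -> mu A = sumL (fun x => fst x * mu (fun y => A (lam ^ k * y + snd x))) L.
Proof.
  intros Hl Hp Hinv. induction k as [|k [L [HL1 HL2]]].
  - exists ((1, 0) :: nil). split; [intros x [<-|[]]; simpl; lra|].
    intros A HA. simpl. rewrite (measure_ext mu (fun y => A (1 * y + 0)) A); [lra|].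
    intro y; replace (1 * y + 0) with y by ring; tauto.
  - exists (flat_map (fun x => map (fun i => (fst x * p i, lam ^ k * t i + snd x)) (seq 0 n)) L).
    split.
    + intros x Hx. apply in_flat_map in Hx. destruct Hx as [y [Hy Hx]].
      apply in_map_iff in Hx. destruct Hx as [i [<- Hi]]. apply in_seq in Hi. simpl.
      apply Rmult_le_pos; auto. left; apply Hp; lia.
    + intros A HA. rewrite HL2, sumL_flat_map by auto. apply sumL_ext. intros x Hx.
      rewrite sumL_map_seq. simpl.
      rewrite (Hinv (fun y => A (lam ^ k * y + snd x))) by (apply borel_affine; auto; apply pow_lt; auto).
      rewrite <- fsum_scal. apply fsum_ext. intros i Hi.
      rewrite (measure_ext mu (fun y => A (lam ^ k * (lam * y + t i) + snd x))
                 (fun y => A (lam * lam ^ k * y + (lam ^ k * t i + snd x)))); [ring|].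
      intro y. replace (lam ^ k * (lam * y + t i) + snd x)
        with (lam * lam ^ k * y + (lam ^ k * t i + snd x)) by ring. tauto.
Qed.

Lemma pow2_unbounded X : exists c : nat, X <= 2 ^ c.
Proof.
  destruct (archimed X) as [H1 H2]. exists (Z.to_nat (up X)).
  assert (H : forall n, INR n <= 2 ^ n).
  { induction n; [simpl; lra|]. rewrite S_INR. simpl. pose proof (pow_R1_Rle 2 n ltac:(lra)). lra. }
  destruct (Z_lt_le_dec (up X) 0).
  - assert (IZR (up X) <= -1) by (apply IZR_le; lia). pose proof (pow2_pos (Z.to_nat (up X))). lra.
  - specialize (H (Z.to_nat (up X))). rewrite INR_IZR_INZ, Z2Nat.id in H by lia. lra.
Qed.

Lemma pow_sandwich lam y : 0 < lam < 1 -> 0 < y <= 1 -> exists k, lam * y < lam ^ k <= y.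
Proof.
  intros Hl Hy.
  destruct (pow_lt_1_zero lam ltac:(rewrite Rabs_pos_eq; lra) y ltac:(lra)) as [K0 HK0].
  specialize (HK0 K0 (le_n _)). rewrite Rabs_pos_eq in HK0 by (apply pow_le; lra).
  assert (G : forall K, lam ^ K <= y -> exists k, lam * y < lam ^ k <= y).
  { induction K; intro HK.
    - exists 0%nat. simpl in *. nra.
    - destruct (Rle_dec (lam ^ K) y); [apply IHK; auto|].
      exists (S K). simpl in *. split; [apply Rmult_lt_compat_l|]; lra. }
  apply (G K0). lra.
Qed.

(* Choosing [lam ^ k] comparable to half the length of [dyad s j] makes the
   pulled-back children [c] generations coarser than [m'+c] generations, where
   [c] depends only on [lam]. *)
Lemma children_moment_le_moment_sum n lam t p mu q s j m' c :
  is_prob_measure mu -> mu (fun x => 0 <= x < 1) = 1 -> 0 < lam < 1 ->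
  (forall i, (i < n)%nat -> 0 < p i) -> wifs_invariant n lam t p mu -> 1 <= q ->
  2 / lam <= 2 ^ c ->
  fsum (fun r => rpow (mu (dyad (s + (m' + c)) (j * 2 ^ Z.of_nat (m' + c) + Z.of_nat r))) q) (2 ^ (m' + c))
  <= rpow (mu (dyad2 s j)) q * (rpow 2 q * moment_sum mu q m').
Proof.
  intros Hmu Hsupp Hl Hp Hinv Hq Hc.
  pose proof (pow2_pos s) as Hs. pose proof (pow2_pos m') as Hm'. pose proof (pow2_pos c) as Hc'.
  assert (Hy : 0 < / 2 ^ (s + 1) <= 1).
  { split; [apply Rinv_0_lt_compat, pow2_pos|].
    rewrite <- Rinv_1. apply Rinv_le_contravar; [lra | apply pow_R1_Rle; lra]. }
  destruct (pow_sandwich lam (/ 2 ^ (s + 1)) Hl Hy) as [k [Hk1 Hk2]].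
  assert (HK : 0 < lam ^ k) by (apply pow_lt; lra).
  destruct (wifs_invariant_iter n lam t p mu ltac:(lra) Hp Hinv k) as [L [HL1 HL2]].
  apply (children_moment_le_cylinders mu Hmu Hsupp (lam ^ k) L); auto.
  apply Rinv_le_contravar; [apply pow2_pos|].
  replace (2 ^ (s + (m' + c))) with (2 ^ s * 2 ^ m' * 2 ^ c) by (rewrite !pow_add; ring).
  replace (2 ^ (s + 1)) with (2 ^ s * 2) in Hk1 by (rewrite pow_add; ring).
  assert (Hlc : 1 <= lam * 2 ^ c / 2) by (apply Rdiv_le_iff in Hc; [apply Rdiv_le_iff; lra | lra]).
  assert (E : 2 ^ s * 2 ^ m' * 2 ^ c * (lam * / (2 ^ s * 2)) = 2 ^ m' * (lam * 2 ^ c / 2))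
    by (field; lra).
  assert (2 ^ s * 2 ^ m' * 2 ^ c * (lam * / (2 ^ s * 2)) <= 2 ^ s * 2 ^ m' * 2 ^ c * lam ^ k)
    by (apply Rmult_le_compat_l; [repeat apply Rmult_le_pos | ]; lra).
  nra.
Qed.

Lemma moment_sum_upper_bound mu q tau delta : is_Lq_spectrum mu tau -> 0 < q -> 0 < delta ->
  exists N, forall m, (N <= m)%nat -> moment_sum mu q m <= Rpower 2 (- (tau q - delta) * INR m).
Proof.
  intros Hs Hq Hd. destruct (Hs q Hq delta Hd) as [[N HN] _].
  exists (max N 1). intros m Hm. specialize (HN m ltac:(lia)).
  assert (Hm0 : 0 < INR m) by (apply lt_0_INR; lia).
  set (S := moment_sum mu q m) in *.
  assert (S0 : 0 <= S) by (apply fsum_ge0; intros; apply rpow_ge0).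
  destruct (Req_dec S 0) as [->|HS]; [left; apply exp_pos|].
  assert (Hln2 : 0 < ln 2) by (pose proof ln_lt_2; lra).
  apply (proj1 (Rlt_div_iff _ _ _ Hm0)) in HN. unfold log2 in HN.
  assert (HlnS : ln S < - (tau q - delta) * INR m * ln 2).
  { replace (ln S) with (ln S / ln 2 * ln 2) by (field; lra). apply Rmult_lt_compat_r; lra. }
  rewrite <- (exp_ln S) by lra. left; apply exp_increasing. exact HlnS.
Qed.

Lemma children_moment_bound n lam t p mu tau q :
  is_prob_measure mu -> mu (fun x => 0 <= x < 1) = 1 -> 0 < lam < 1 ->
  (forall i, (i < n)%nat -> 0 < p i) -> wifs_invariant n lam t p mu ->
  is_Lq_spectrum mu tau -> 1 <= q ->
  forall delta, 0 < delta -> exists M : nat, forall m : nat, (M <= m)%nat ->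
     forall (s : nat) (j : Z),
       fsum (fun r => rpow (mu (dyad (s + m) (j * 2 ^ Z.of_nat m + Z.of_nat r)%Z)) q) (2 ^ m)%nat
         <= Rpower 2 (- (tau q - delta) * INR m) * rpow (mu (dyad2 s j)) q.
Proof.
  intros Hmu Hsupp Hl Hp Hinv Hs Hq delta Hd.
  destruct (pow2_unbounded (2 / lam)) as [c Hc].
  destruct (moment_sum_upper_bound mu q tau (delta / 2) Hs ltac:(lra) ltac:(lra)) as [N0 HN0].
  destruct (pow2_unbounded (2 * (q + Rabs (tau q - delta) * INR c) / delta)) as [e He].
  exists (max N0 (2 ^ e) + c)%nat. intros m Hmm s j.
  destruct (Nat.le_exists_sub c m ltac:(lia)) as [m' [-> _]].
  eapply Rle_trans; [apply (children_moment_le_moment_sum n lam t p); eauto|].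
  rewrite Rmult_comm. apply Rmult_le_compat_r; [apply rpow_ge0|].
  rewrite rpow_Rpower by lra.
  apply Rle_trans with (Rpower 2 q * Rpower 2 (- (tau q - delta / 2) * INR m')).
  { apply Rmult_le_compat_l; [left; apply exp_pos | apply HN0; lia]. }
  (* the constant factor [2^q] and the [c] extra generations are absorbed by
     the slack [delta / 2] once [m'] is large *)
  rewrite <- Rpower_plus. apply Rle_Rpower; [lra|].
  assert (Hm' : INR (2 ^ e) <= INR m') by (apply le_INR; lia). rewrite INR_pow2 in Hm'.
  assert (Hab : (tau q - delta) * INR c <= Rabs (tau q - delta) * INR c)
    by (apply Rmult_le_compat_r; [apply pos_INR | apply Rle_abs]).
  assert (2 * (q + Rabs (tau q - delta) * INR c) <= delta * INR m')
    by (apply (proj1 (Rdiv_le_iff _ _ _ Hd)) in He; nra).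
  rewrite plus_INR. nra.
Qed.

(** * The sparse moment bound (i) *)

Lemma secant_slope_gt tau q alpha eps : derivable_pt_lim tau q alpha -> 0 < eps ->
  exists h, 0 < h /\ (alpha - eps) * h < tau (q + h) - tau q.
Proof.
  intros Hder Heps. destruct (Hder eps Heps) as [Dl HDl].
  pose proof (cond_pos Dl). exists (Dl / 2). split; [lra|].
  assert (Hh : Rabs ((tau (q + Dl / 2) - tau q) / (Dl / 2) - alpha) < eps)
    by (apply HDl; [lra | rewrite Rabs_pos_eq; lra]).
  apply Rabs_def2 in Hh. destruct Hh as [_ Hh].
  replace (tau (q + Dl / 2) - tau q) with ((tau (q + Dl / 2) - tau q) / (Dl / 2) * (Dl / 2))
    by (field; lra).
  apply Rmult_lt_compat_r; lra.
Qed.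

(* With [q' = q (1 + u)], the exponent of Hölder's inequality between [q] and
   [q'] beats [tau q] by [kappa u / 4]: the slope of [tau] on [[q, q']] is
   nearly [alpha], and [Tstar <= alpha q - tau q]. *)
Lemma legendre_exponent_gap tau q alpha Tstar kappa h u : 0 < q -> 0 < u -> h = q * u ->
  Tstar <= alpha * q - tau q -> (alpha - kappa / (2 * q)) * h < tau (q + h) - tau q ->
  (Tstar - kappa) * u - (tau (q + h) - kappa * u / 4) <= - (tau q + kappa * u / (4 * (1 + u))) * (1 + u).
Proof.
  intros Hq Hu -> Hleg Hsec.
  assert (E : (alpha - kappa / (2 * q)) * (q * u) = (alpha * q - kappa / 2) * u) by (field; lra).
  assert (E' : kappa * u / (4 * (1 + u)) * (1 + u) = kappa * u / 4) by (field; lra).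
  assert (Tstar * u <= (alpha * q - tau q) * u) by (apply Rmult_le_compat_r; lra).
  replace (- (tau q + kappa * u / (4 * (1 + u))) * (1 + u)) with (- tau q - tau q * u - kappa * u / 4)
    by (rewrite <- E'; ring).
  lra.
Qed.

Lemma rpow_length_le_Rpower2 {X} (D : list X) e u : 0 <= u ->
  INR (length D) <= Rpower 2 e -> rpow (INR (length D)) u <= Rpower 2 (e * u).
Proof.
  intros Hu HD. destruct (Req_dec (INR (length D)) 0) as [->|HN].
  - rewrite rpow_le0 by lra. left; apply exp_pos.
  - rewrite rpow_Rpower, <- Rpower_mult by (pose proof (pos_INR (length D)); lra).
    apply Rle_Rpower_l; [lra|]. split; [pose proof (pos_INR (length D)); lra | assumption].
Qed.

Lemma sparse_children_moment_bound n lam t p mu tau q alpha Tstar :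
  is_prob_measure mu -> mu (fun x => 0 <= x < 1) = 1 -> 0 < lam < 1 ->
  (forall i, (i < n)%nat -> 0 < p i) -> wifs_invariant n lam t p mu ->
  is_Lq_spectrum mu tau -> 1 <= q ->
  derivable_pt_lim tau q alpha -> is_legendre tau alpha Tstar ->
  forall kappa, 0 < kappa ->
     exists eta, 0 < eta /\
     exists M : nat, forall m : nat, (M <= m)%nat ->
     forall (s : nat) (j : Z) (D : list Z),
       NoDup D ->
       (forall k, In k D -> forall x, dyad (s + m) k x -> dyad s j x) ->
       INR (length D) <= Rpower 2 ((Tstar - kappa) * INR m) ->
       coll_sum mu q (s + m) D
         <= Rpower 2 (- (tau q + eta) * INR m) * rpow (mu (dyad2 s j)) q.
Proof.
  intros Hmu Hsupp Hl Hp Hinv Hs Hq Hder [Hleg _] kappa Hk.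
  destruct (secant_slope_gt tau q alpha (kappa / (2 * q)) Hder) as [h [Hh Hsec]];
    [apply Rdiv_lt_0_compat; lra|].
  set (u := h / q). assert (Hu : 0 < u) by (apply Rdiv_lt_0_compat; lra).
  assert (Hhu : h = q * u) by (unfold u; field; lra).
  pose proof (legendre_exponent_gap tau q alpha Tstar kappa h u ltac:(lra) Hu Hhu (Hleg q ltac:(lra)) Hsec)
    as Hgap.
  assert (Hqu : q * (1 + u) = q + h) by lra.
  destruct (children_moment_bound n lam t p mu tau (q + h) Hmu Hsupp Hl Hp Hinv Hs ltac:(lra)
              (kappa * u / 4) ltac:(nra)) as [M HM].
  exists (kappa * u / (4 * (1 + u))). split; [apply Rdiv_lt_0_compat; nra|].
  exists M. intros m Hm s j D Hnd Hsub Hlen.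
  set (b := fun k => rpow (mu (dyad (s + m) k)) q).
  change (coll_sum mu q (s + m) D) with (sumL b D).
  set (Y := rpow (mu (dyad2 s j)) (q + h)).
  assert (Hholder : rpow (sumL b D) (1 + u)
                    <= rpow (INR (length D)) u * sumL (fun k => rpow (mu (dyad (s + m) k)) (q + h)) D).
  { replace u with (1 + u - 1) at 2 by ring.
    rewrite (sumL_ext (fun k => rpow (mu (dyad (s + m) k)) (q + h)) (fun k => rpow (b k) (1 + u)))
      by (intros; unfold b; rewrite rpow_rpow, Hqu; reflexivity).
    apply sumL_rpow_power_mean; [lra | intro; apply rpow_ge0]. }
  assert (Hfull : sumL (fun k => rpow (mu (dyad (s + m) k)) (q + h)) D
                  <= Rpower 2 (- (tau (q + h) - kappa * u / 4) * INR m) * Y).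
  { eapply Rle_trans; [|apply HM; assumption].
    apply (sumL_le_fsum_range (fun k => rpow (mu (dyad (s + m) k)) (q + h))); [intro; apply rpow_ge0 | assumption |].
    intros k Hk0. apply (dyad_child_range s). apply Hsub; assumption. }
  pose proof (rpow_length_le_Rpower2 D _ u ltac:(lra) Hlen) as Hcount.
  apply (rpow_le_inv _ _ (1 + u)); [lra | apply Rmult_le_pos; [left; apply exp_pos | apply rpow_ge0]|].
  rewrite rpow_mul, rpow_rpow, Hqu by (try apply rpow_ge0; left; apply exp_pos).
  rewrite (rpow_Rpower (Rpower 2 _)), Rpower_mult by apply exp_pos.
  fold Y. eapply Rle_trans; [exact Hholder|].
  eapply Rle_trans; [apply Rmult_le_compat; [apply rpow_ge0 | apply sumL_ge0; intros; apply rpow_ge0 | exact Hcount | exact Hfull]|].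
  rewrite <- Rmult_assoc, <- Rpower_plus. apply Rmult_le_compat_r; [apply rpow_ge0|].
  apply Rle_Rpower; [lra|].
  pose proof (pos_INR m). nra.
Qed.

Theorem proposition3p10
  (n : nat) (lam : R) (t p : nat -> R) (mu : (R -> Prop) -> R)
  (tau : R -> R) (q alpha Tstar : R) :
  (1 <= n)%nat ->
  0 < lam < 1 ->
  (forall i, (i < n)%nat -> 0 < p i) ->
  fsum p n = 1 ->
  is_prob_measure mu ->
  wifs_invariant n lam t p mu ->
  mu (fun x => 0 <= x < 1) = 1 ->
  is_Lq_spectrum mu tau ->
  1 < q ->
  derivable_pt_lim tau q alpha ->
  is_legendre tau alpha Tstar ->
  (forall kappa, 0 < kappa ->
     exists eta, 0 < eta /\
     exists M : nat, forall m : nat, (M <= m)%nat ->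
     forall (s : nat) (j : Z) (D : list Z),
       NoDup D ->
       (forall k, In k D -> forall x, dyad (s + m) k x -> dyad s j x) ->
       INR (length D) <= Rpower 2 ((Tstar - kappa) * INR m) ->
       coll_sum mu q (s + m) D
         <= Rpower 2 (- (tau q + eta) * INR m) * rpow (mu (dyad2 s j)) q)
  /\
  (forall delta, 0 < delta ->
     exists M : nat, forall m : nat, (M <= m)%nat ->
     forall (s : nat) (j : Z),
       fsum (fun r => rpow (mu (dyad (s + m) (j * 2 ^ Z.of_nat m + Z.of_nat r)%Z)) q)
            (2 ^ m)%nat
         <= Rpower 2 (- (tau q - delta) * INR m) * rpow (mu (dyad2 s j)) q).
Proof.
  (* [1 <= n] and [fsum p n = 1] follow from the invariance of the probability measure [mu]. *)
  intros _ Hl Hp _ Hmu Hinv Hsupp Hs Hq Hder Hleg. split.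
  - apply (sparse_children_moment_bound n lam t p mu tau q alpha Tstar); auto; lra.
  - apply (children_moment_bound n lam t p); auto; lra.
Qed.
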